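(* Let $M=(E,\mathcal{I})$ be a matroid, $\Delta$ a nonnegative integer, $w:E\to\{-\Delta,\dots,\Delta\}$ integer weights and $\mu\ge0$. Let $A,B\in\mathcal{I}$ be disjoint with $|A|=|B|=k$ and $|w(A)-w(B)|\le\mu$. Then there exist subsets $A'\subseteq A$ and $B'\subseteq B$ of equal cardinality such that (i) $(A\setminus A')\cup B'\in\mathcal{I}$, (ii) $|A'|=|B'|\ge (k-\mu)/(2\Delta+1)^2$, and (iii) $w(a)\ge w(b)$ for each $a\in A'$ and $b\in B'$.
   Context: $w(S)=\sum_{e\in S}w(e)$ for $S\subseteq E$. *)

From mathcomp Require Import all_boot all_order all_algebra.
Set Implicit Arguments. Unset Strict Implicit. Unset Printing Implicit Defensive.
Import Order.TTheory GRing.Theory Num.Theory.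

Definition is_matroid (E : finType) (I : pred {set E}) : Prop :=
  [/\ I set0,
      (forall X Y : {set E}, Y \subset X -> I X -> I Y) &
      (forall X Y : {set E}, I X -> I Y -> #|X| < #|Y| ->
          exists2 y, y \in Y :\: X & I (y |: X))].

Definition wsum (E : finType) (w : E -> int) (S : {set E}) : int :=
  (\sum_(e in S) w e)%R.

From mathcomp Require Import all_boot all_order all_algebra zify lra.
Import Order.TTheory GRing.Theory Num.Theory.

(* Shift the weights to levels j = w + Delta in [0, 2 Delta].  For a threshold i,
   let A_i be the elements of A of level >= i and B_i those of B of level <= i.
   Whenever |A_i| + |B_i| >= k, two augmentations exchange a subset A' of A_i of
   size |A_i| + |B_i| - k against an equally large subset B' of B_i, and every
   level in A' is >= i >= every level in B'.  Summing |A_i| + |B_i| over the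
   2 Delta + 1 thresholds gives k + (2 Delta + 1) k + w(A) - w(B), so the best
   threshold yields |A'| >= (k + w(A) - w(B)) / (2 Delta + 1), which is even
   better than the claimed bound. *)

Section Counting.

Variable T : finType.
Implicit Types (A : {set T}) (j : T -> nat).

Lemma card_set_cond_sum A (P : pred T) :
  #|[set x in A | P x]| = \sum_(x in A) P x.
Proof.
rewrite -sum1_card big_mkcond [RHS]big_mkcond /=.
by apply: eq_bigr => x _; rewrite inE; case: (x \in A); case: (P x).
Qed.

Lemma sum_ord_leq n m : \sum_(i < n) (i <= m : nat) = minn n m.+1.
Proof. by elim: n => [|n IHn]; rewrite ?big_ord0 // big_ord_recr /= IHn; lia. Qed.

Lemma sum_ord_geq n m : \sum_(i < n) (m <= i : nat) = n - m.
Proof. by elim: n => [|n IHn]; rewrite ?big_ord0 // big_ord_recr /= IHn; lia. Qed.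

Lemma sum_card_level_geq A j n : (forall x, j x < n) ->
  \sum_(i < n) #|[set x in A | i <= j x]| = \sum_(x in A) (j x).+1.
Proof.
move=> ltjn; rewrite (eq_bigr (fun i : 'I_n => \sum_(x in A) (i <= j x : nat))); last first.
  by move=> i _; exact: card_set_cond_sum.
rewrite exchange_big; apply: eq_bigr => x _.
by rewrite sum_ord_leq; apply/minn_idPr.
Qed.

Lemma sum_card_level_leq A j n :
  \sum_(i < n) #|[set x in A | j x <= i]| = \sum_(x in A) (n - j x).
Proof.
rewrite (eq_bigr (fun i : 'I_n => \sum_(x in A) (j x <= i : nat))); last first.
  by move=> i _; exact: card_set_cond_sum.
by rewrite exchange_big; apply: eq_bigr => x _; rewrite sum_ord_geq.
Qed.

End Counting.

Section Matroid.

Context {E : finType} {I : pred {set E}}.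
Hypothesis matroidI : is_matroid I.
Implicit Types X Y A B : {set E}.

Lemma matroid_sub [X Y] : Y \subset X -> I X -> I Y.
Proof. by case: matroidI => _ subI _; apply: subI. Qed.

Lemma matroid_augment [X Y] n : I X -> I Y -> #|X| + n <= #|Y| ->
  exists Z : {set E}, [/\ Z \subset Y :\: X, #|Z| = n & I (X :|: Z)].
Proof.
move=> IX IY; elim: n => [|n IHn] leXY.
  by exists set0; rewrite sub0set cards0 setU0.
rewrite addnS in leXY; have [Z [sZ cZ IXZ]] := IHn (ltnW leXY).
have ltXZY : #|X :|: Z| < #|Y|.
  by apply: leq_ltn_trans (leq_card_setU X Z) _; rewrite cZ.
case: matroidI => _ _ augI; have [y] := augI _ _ IXZ IY ltXZY.
rewrite !inE negb_or => /andP[/andP[yNX yNZ] yY] Iy.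
exists (y |: Z); split.
- by rewrite subUset sub1set !inE yNX yY sZ.
- by rewrite cardsU1 yNZ cZ.
- by rewrite setUCA.
Qed.

Lemma matroid_exchange [A] [A1 B1 : {set E}] :
  I A -> I B1 -> A1 \subset A -> #|B1| <= #|A| <= #|A1| + #|B1| ->
  exists A' B' : {set E},
    [/\ A' \subset A1, B' \subset B1, #|A'| = #|B'|,
        #|A'| + #|A| = #|A1| + #|B1| & I ((A :\: A') :|: B')].
Proof.
move=> IA IB1 sA1A /andP[leB1A leAA1B1].
set X := A :\: A1.
have cX : #|X| = #|A| - #|A1| by rewrite cardsDS.
have leXB1 : #|X| <= #|B1| by rewrite cX leq_subLR.
have IX : I X by apply: matroid_sub IA; apply: subsetDl.
have [|Z [sZ cZ IXZ]] := matroid_augment (#|B1| - #|X|) IX IB1; first by rewrite subnKC.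
have [|W [sW cW IXZW]] := matroid_augment (#|A| - #|B1|) IXZ IA.
  rewrite -{2}(subnKC leB1A) leq_add2r -(subnKC leXB1) -cZ.
  exact: leq_card_setU.
have sWA1 : W \subset A1.
  apply/subsetP=> x /(subsetP sW); rewrite !inE.
  by case: (x \in A1); case: (x \in A); rewrite ?orbT ?andbF.
have cA' : #|A1 :\: W| = #|A1| + #|B1| - #|A| by rewrite cardsDS // cW subnBA.
have cZ' : #|Z| = #|A1| + #|B1| - #|A|.
  by rewrite cZ cX subnBA ?subset_leq_card // addnC.
exists (A1 :\: W), Z; split; rewrite ?subsetDl ?cA' ?cZ' ?subnK //.
  exact: subset_trans sZ (subsetDl _ _).
suff -> : (A :\: (A1 :\: W)) :|: Z = (X :|: Z) :|: W by [].
apply/setP=> x; rewrite !inE; case xW: (x \in W); last by rewrite !orbF.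
by move: (subsetP sW x xW); rewrite !inE => /andP[_ ->]; rewrite !orbT.
Qed.

Lemma matroid_exchange_threshold (j : E -> nat) i [A B] :
  I A -> I B -> #|B| <= #|A| ->
  exists A' B' : {set E},
    [/\ A' \subset A /\ B' \subset B, #|A'| = #|B'|, I ((A :\: A') :|: B'),
        #|[set a in A | i <= j a]| + #|[set b in B | j b <= i]| <= #|A'| + #|A|
      & {in A' & B', forall a b, j b <= j a}].
Proof.
move=> IA IB leBA; set Ai := [set a in A | _]; set Bi := [set b in B | _].
have [ltA|geA] := ltnP (#|Ai| + #|Bi|) #|A|.
  exists set0, set0; rewrite !sub0set !cards0 setD0 setU0 (ltnW ltA).
  by split=> // a; rewrite inE.
have sAi : Ai \subset A by apply/subsetP=> x; rewrite inE => /andP[].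
have sBi : Bi \subset B by apply/subsetP=> x; rewrite inE => /andP[].
have leBiA : #|Bi| <= #|A| by apply: leq_trans (subset_leq_card sBi) leBA.
have [A' [B' [sA' sB' cAB cA' IAB]]] :=
  matroid_exchange IA (matroid_sub sBi IB) sAi (introT andP (conj leBiA geA)).
exists A', B'; split; rewrite ?cA' ?(subset_trans sA') ?(subset_trans sB') //.
move=> a b /(subsetP sA') + /(subsetP sB'); rewrite !inE => /andP[_ lija] /andP[_ ljbi].
exact: leq_trans lija.
Qed.

Lemma matroid_exchange_levels [j : E -> nat] [n A B] :
  (forall e, j e <= n) -> I A -> I B -> #|A| = #|B| ->
  exists A' B' : {set E},
    [/\ A' \subset A /\ B' \subset B, #|A'| = #|B'|, I ((A :\: A') :|: B'),
        \sum_(a in A) j a + #|A| <= n.+1 * #|A'| + \sum_(b in B) j b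
      & {in A' & B', forall a b, j b <= j a}].
Proof.
move=> lejn IA IB cAB.
pose g (i : 'I_n.+1) := #|[set a in A | i <= j a]| + #|[set b in B | j b <= i]|.
have [i0 maxg] := bigop.eq_bigmax g ltac:(by rewrite card_ord).
have avg : \sum_(i < n.+1) g i <= n.+1 * g i0.
  rewrite -maxg -[X in X * _]card_ord -sum_nat_const.
  by apply: leq_sum => i _; apply: leq_bigmax.
have total : \sum_(i < n.+1) g i + \sum_(b in B) j b
             = \sum_(a in A) j a + #|A| + n.+1 * #|B|.
  rewrite big_split /= sum_card_level_geq // sum_card_level_leq.
  rewrite -addnA -big_split /=.
  under eq_bigr do rewrite -addn1.
  have subjK e : n.+1 - j e + j e = n.+1 by rewrite subnK // leqW.
  under [X in _ + X]eq_bigr do rewrite subjK.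
  by rewrite big_split /= sum1_card !sum_nat_const mulnC.
have [A' [B' [sAB' cA'B' IAB leg lej]]] :=
  matroid_exchange_threshold j i0 IA IB (eq_leq (esym cAB)).
exists A', B'; split=> //.
have : n.+1 * g i0 <= n.+1 * (#|A'| + #|A|) by rewrite leq_mul2l leg orbT.
rewrite -cAB mulnDr in total *; lia.
Qed.

Lemma matroid_exchange_weights [w : E -> int] [Delta : nat] [A B] :
  (forall e, `|w e| <= Delta%:Z)%R -> I A -> I B -> #|A| = #|B| ->
  exists A' B' : {set E},
    [/\ A' \subset A /\ B' \subset B, #|A'| = #|B'|, I ((A :\: A') :|: B'),
        (#|A|%:Z + wsum w A - wsum w B <= (2 * Delta).+1%:Z * #|A'|%:Z)%R
      & forall a b, a \in A' -> b \in B' -> (w b <= w a)%R].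
Proof.
move=> lewD IA IB cAB.
pose j e := absz (w e + Delta%:Z)%R.
have jE e : ((j e)%:Z = w e + Delta%:Z)%R.
  by rewrite /j gez0_abs //; move: (lewD e); rewrite ler_norml; lia.
have lej e : j e <= 2 * Delta.
  by move: (jE e) (lewD e); rewrite ler_norml; lia.
have sum_jE (S : {set E}) :
    ((\sum_(e in S) j e)%N%:Z = wsum w S + (Delta * #|S|)%N%:Z)%R.
  rewrite -natz natr_sum /wsum mulnC -sum_nat_const -natz natr_sum -big_split /=.
  by apply: eq_bigr => e _; rewrite !natz jE.
have [A' [B' [sAB' cA'B' IAB lesum lejab]]] :=
  matroid_exchange_levels lej IA IB cAB.
exists A', B'; split=> //.
- move: lesum; rewrite -lez_nat PoszD PoszD PoszM sum_jE sum_jE -cAB; lia.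
- by move=> a b aA' bB'; move: (lejab a b aA' bB') (jE a) (jE b); lia.
Qed.

End Matroid.

Local Open Scope ring_scope.

Theorem lemma8 (R : realFieldType) (E : finType) (I : pred {set E})
  (Delta : nat) (w : E -> int) (mu : R) (A B : {set E}) (k : nat) :
  is_matroid I ->
  (forall e, `|w e| <= (Delta%:Z)) ->
  0 <= mu ->
  I A -> I B -> [disjoint A & B] ->
  #|A| = k -> #|B| = k ->
  `|(wsum w A - wsum w B)%:~R| <= mu ->
  exists A' B' : {set E},
    [/\ A' \subset A /\ B' \subset B, #|A'| = #|B'|,
        I ((A :\: A') :|: B'),
        (k%:R - mu) / ((2 * Delta + 1) ^ 2)%N%:R <= (#|A'|%:R : R) &
        forall a b, a \in A' -> b \in B' -> w b <= w a].
Proof.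
move=> matroidI lewD _ IA IB _ cA cB lewAB.
have [|A' [B' [sAB' cA'B' IAB lew lewab]]] :=
  matroid_exchange_weights matroidI lewD IA IB; first by rewrite cA cB.
exists A', B'; split=> //.
set N : R := (2 * Delta).+1%:R; set x : R := #|A'|%:R.
have N_ge1 : 1 <= N by rewrite ler1n.
have le_kmu_Nx : k%:R - mu <= N * x.
  move: lewAB; rewrite intrB ler_norml => /andP[lemu _].
  move: lew; rewrite -(ler_int R) cA intrB intrD intrM -!pmulrn -/N -/x.
  by lra.
rewrite addn1 natrX ler_pdivrMr ?exprn_gt0 ?(lt_le_trans ltr01 N_ge1) //.
apply: (le_trans le_kmu_Nx).
by rewrite -/N expr2 mulrA [N * x]mulrC ler_peMr // mulr_ge0.
Qed.
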